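(* Let $G=\langle V,E_s\rangle$ be an undirected graph with $V=\{1,\dots,n\}$, where edges are treated as bidirected (so $(i,j)\in E_s$ iff $(j,i)\in E_s$, no loops). Let $\mu_{ij}=\mu_{ji}\ge 0$ ($i\neq j$) be requirements, and let $\delta=(\delta_1,\dots,\delta_n)$ be a sequence of positive integers with $\sum_i\delta_i=2(n-1)$ such that $G$ has at least one spanning tree in which every vertex $i$ has degree $\delta_i$ (an admissible tree). Let $m=|\{i:\delta_i>1\}|$, $L=m+2$, and let $M\ge L$ be a constant. For a spanning tree $T$ let $C_A(T)=\sum_{i\neq j}\mu_{ij}d_T(i,j)$, where $d_T(i,j)$ is the number of edges of the path from $i$ to $j$ in $T$; an admissible tree minimizing $C_A$ is called optimal. Consider the mixed-integer linear program (F1L) in variables $x_{ij}=x_{ji}\in\{0,1\}$ for $(i,j)\in E_s$, integer variables $d_{ij}=d_{ji}\in\{1,\dots,L\}$ for $i\neq j\in V$, and $y_{ikj}\in\{0,1\}$ for $i<j$, $(i,k)\in E_s$, $k\neq j$: minimize $\sum_{i,j=1,\,i\neq j}^n\mu_{ij}d_{ij}$ subject to - $d_{ij}\ge d_{kj}+1-M(1-y_{ikj})$ for all $i<j$ and $(i,k)\in E_s$ with $k\neq j$; - $\sum_{k\neq j:(i,k)\in E_s}y_{ikj}=1-x_{ij}$ for all $(i,j)\in E_s$, $i<j$; - $\sum_{k\neq j:(i,k)\in E_s}y_{ikj}=1$ for all $i<j$ with $(i,j)\notin E_s$; - $y_{ikj}\le x_{ik}$ for all $i<j$, $(i,k)\in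 E_s$, $k\neq j$; - $\sum_{j:(i,j)\in E_s}x_{ij}=\delta_i$ for all $i\in V$. Let $(x^*,y^*,d^* )$ be an optimal solution of F1L. Then the edges $\{(i,j)\in E_s:x^*_{ij}=1\}$ form an optimal tree, and the optimal objective value equals its communication cost $C_A$.
   Context: Variable $y_{ikj}$ is intended to equal 1 iff the shortest path from $i$ to $j$ in the tree goes through the neighbour $k$ of $i$; $d_{ij}$ is intended to be the tree distance between $i$ and $j$. *)

From HB Require Import structures.
From mathcomp Require Import all_boot all_order all_algebra.
Set Implicit Arguments. Unset Strict Implicit. Unset Printing Implicit Defensive.
Import Order.TTheory GRing.Theory Num.Theory.
Local Open Scope ring_scope.

Definition simple_graph n (E : rel 'I_n) : Prop :=
  (forall i j, E i j = E j i) /\ (forall i, ~~ E i i).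

Definition n_edges n (T : rel 'I_n) : nat :=
  #|[set p : 'I_n * 'I_n | (p.1 < p.2)%N && T p.1 p.2]|.

Definition spanning_tree n (E T : rel 'I_n) : Prop :=
  (forall i j, T i j -> E i j) /\ (forall i j, T i j = T j i) /\
  (forall i j, connect T i j) /\ n_edges T = (n - 1)%N.

Definition degree n (T : rel 'I_n) (i : 'I_n) : nat := #|[set j | T i j]|.

Definition admissible n (E : rel 'I_n) (delta : 'I_n -> nat) (T : rel 'I_n) : Prop :=
  spanning_tree E T /\ forall i, degree T i = delta i.

(* Number of edges of a shortest path from i to j in T (for a tree, the
   number of edges of the unique i-j path): the least k < n such that there is
   a walk i = v0, v1, ..., vk = j along edges of T; n if none exists. *)
Definition dist n (T : rel 'I_n) (i j : 'I_n) : nat :=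
  find (fun k => [exists p : k.-tuple 'I_n, path T i p && (last i p == j)])
       (iota 0 n).

Definition comm_cost (R : numDomainType) n (mu : 'I_n -> 'I_n -> R)
  (T : rel 'I_n) : R :=
  \sum_(i : 'I_n) \sum_(j : 'I_n | j != i) mu i j * (dist T i j)%:R.

(* Feasibility for the MILP F1L; x, y are binary (bool), d is integer-valued
   in {1,...,L}. Only the entries indexed as in the paper are constrained. *)
Definition F1L_feasible (R : numDomainType) n (E : rel 'I_n)
  (delta : 'I_n -> nat) (L : nat) (M : R)
  (x : 'I_n -> 'I_n -> bool) (y : 'I_n -> 'I_n -> 'I_n -> bool)
  (d : 'I_n -> 'I_n -> nat) : Prop :=
  (forall i j, E i j -> x i j = x j i) /\
  (forall i j, i != j -> d i j = d j i /\ (1 <= d i j <= L)%N) /\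
  (forall i j k : 'I_n, (i < j)%N -> E i k -> k != j ->
     (d i j)%:R >= (d k j)%:R + 1 - M * (1 - (y i k j)%:R)) /\
  (forall i j : 'I_n, (i < j)%N -> E i j ->
     (\sum_(k : 'I_n | E i k && (k != j)) (y i k j : nat))%N = (1 - x i j)%N) /\
  (forall i j : 'I_n, (i < j)%N -> ~~ E i j ->
     (\sum_(k : 'I_n | E i k && (k != j)) (y i k j : nat))%N = 1%N) /\
  (forall i j k : 'I_n, (i < j)%N -> E i k -> k != j -> y i k j ==> x i k) /\
  (forall i, (\sum_(j : 'I_n | E i j) (x i j : nat))%N = delta i).

Definition F1L_obj (R : numDomainType) n (mu : 'I_n -> 'I_n -> R)
  (d : 'I_n -> 'I_n -> nat) : R :=
  \sum_(i : 'I_n) \sum_(j : 'I_n | j != i) mu i j * (d i j)%:R.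

Definition selected n (E : rel 'I_n) (x : 'I_n -> 'I_n -> bool) : rel 'I_n :=
  fun i j => E i j && x i j.

From HB Require Import structures.
From mathcomp Require Import all_boot all_order all_algebra.
From mathcomp Require Import lra.
Import Order.TTheory GRing.Theory Num.Theory.

Set Implicit Arguments. Unset Strict Implicit. Unset Printing Implicit Defensive.

(* Let S be the edge set selected by a feasible point (x, y, d). For i <> j,
   either ij is an S-edge or the neighbour k with y_ikj = 1 is an S-neighbour
   of i with d_kj < d_ij (big-M constraint), so S contains an i-j walk of length
   at most d_ij. Hence S is connected, and its degrees delta sum to 2(n-1), so
   S is an admissible tree with C_A(S) <= objective. Conversely an admissible
   tree T yields the feasible point (T, next hop of i towards j, d_T): the
   inner vertices of a path in T have degree at least 2, so d_T <= m + 1 < L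
   <= M and the big-M constraint is slack where y = 0. By optimality the
   objective lies between C_A(S) and C_A(T) for every admissible T. *)

Section Walks.
Variables (n : nat) (T : rel 'I_n).

Definition walk (a b : 'I_n) (k : nat) : Prop :=
  exists p : seq 'I_n, [/\ size p = k, path T a p & last a p = b].

Lemma walk0 a b : walk a b 0 -> a = b.
Proof. by case=> [[|? ?] [//= _ _ ->]]. Qed.

Lemma walk_nil a : walk a a 0.
Proof. by exists [::]. Qed.

Lemma walk_cons a c b k : T a c -> walk c b k -> walk a b k.+1.
Proof. by move=> Tac [p [sp pp lp]]; exists (c :: p); rewrite /= Tac sp. Qed.

Lemma walk_uncons a b k : walk a b k.+1 -> exists2 c, T a c & walk c b k.
Proof.
by case=> [[|c p] [//= [sp] /andP[Tac pp] lp]]; exists c => //; exists p.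
Qed.

Lemma walk_rev : symmetric T -> forall a b k, walk a b k -> walk b a k.
Proof.
move=> Tsym a b k [p [sp pp lp]]; case/lastP: p sp pp lp => [|q c] sp pp lp.
  by move: sp lp => /= <- ->; exists [::].
exists (rev (belast a (rcons q c))); split.
- by rewrite size_rev size_belast.
- by rewrite -lp rev_path (eq_path (e' := T)).
- by rewrite belast_rcons rev_cons last_rcons.
Qed.

Lemma dist_le_n a b : (dist T a b <= n)%N.
Proof. by rewrite /dist (leq_trans (find_size _ _)) // size_iota. Qed.

Lemma dist_le a b k : walk a b k -> (dist T a b <= k)%N.
Proof.
move=> [p [sp pp lp]].
have [lt_kn | le_nk] := ltnP k n; last exact: leq_trans (dist_le_n a b) le_nk.
rewrite leqNgt; apply/negP => /(before_find 0).
rewrite nth_iota // add0n => /existsP; apply.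
have size_p : size p == k by rewrite sp.
by exists (Tuple size_p); rewrite /= pp lp eqxx.
Qed.

Lemma dist_walk a b : (dist T a b < n)%N -> walk a b (dist T a b).
Proof.
move=> lt_dn; have has_walk : has (fun k =>
    [exists p : k.-tuple 'I_n, path T a p && (last a p == b)]) (iota 0 n).
  by rewrite has_find size_iota.
move: (nth_find 0 has_walk); rewrite -/(dist T a b) nth_iota // add0n.
by case/existsP=> p /andP[pp /eqP lp]; exists p; rewrite size_tuple.
Qed.

Lemma connect_dist_lt a b : connect T a b -> (dist T a b < n)%N.
Proof.
case/connectP=> p pp ->; case: (shortenP pp) => q pq uq _.
apply: leq_ltn_trans (dist_le (k := size q) _) _; first by exists q.
by have := max_card (mem (a :: q)); rewrite (card_uniqP uq) card_ord.
Qed.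

Lemma dist_sym : symmetric T -> forall a b, dist T a b = dist T b a.
Proof.
move=> Tsym.
suff le_dist a b : (dist T a b <= dist T b a)%N.
  by move=> a b; apply/eqP; rewrite eqn_leq !le_dist.
have [lt_dn | le_nd] := ltnP (dist T b a) n.
  exact/dist_le/walk_rev/dist_walk.
exact: leq_trans (dist_le_n _ _) le_nd.
Qed.

End Walks.

Section Degrees.
Variables (n : nat) (T : rel 'I_n).

Lemma degreeE i : degree T i = (\sum_j (T i j : nat))%N.
Proof.
rewrite /degree -sum1_card big_mkcond /=; apply: eq_bigr => j _.
by rewrite inE; case: (T i j).
Qed.

Lemma n_edgesE :
  n_edges T = (\sum_(i : 'I_n) \sum_(j : 'I_n) ((i < j)%N && T i j : nat))%N.
Proof.
rewrite /n_edges -sum1_card big_mkcond pair_big /=; apply: eq_bigr => -[i j] _.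
by rewrite inE /=; case: ifP.
Qed.

Lemma sum_degree : symmetric T -> (forall i, ~~ T i i) ->
  (\sum_i degree T i = 2 * n_edges T)%N.
Proof.
move=> Tsym Tirr; rewrite n_edgesE mul2n -addnn.
have -> : (\sum_i degree T i =
    \sum_(i : 'I_n) \sum_(j : 'I_n) ((i < j)%N && T i j : nat) +
    \sum_(i : 'I_n) \sum_(j : 'I_n) ((j < i)%N && T i j : nat))%N.
  rewrite -big_split; apply: eq_bigr => i _; rewrite degreeE -big_split.
  apply: eq_bigr => j _; case: (ltngtP i j) => [||/val_inj->] /=.
  - by rewrite addn0.
  - by rewrite add0n.
  - by rewrite (negbTE (Tirr j)).
congr (_ + _)%N; rewrite exchange_big; apply: eq_bigr => i _.
by apply: eq_bigr => j _; rewrite Tsym.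
Qed.

Lemma two_neighbours_degree v u w : T v u -> T v w -> u != w ->
  (1 < degree T v)%N.
Proof.
move=> Tvu Tvw uw; apply: (@leq_trans #|[set u; w]|); first by rewrite cards2 uw.
by apply: subset_leq_card; apply/subsetP => z; rewrite !inE => /orP[]/eqP->.
Qed.

Lemma uniq_path_inner_neighbours a p1 v p2 b :
  path T a (p1 ++ v :: rcons p2 b) -> uniq (a :: p1 ++ v :: rcons p2 b) ->
  [/\ T (last a p1) v, T v (head b p2) & last a p1 != head b p2].
Proof.
rewrite cat_path -cat_cons cat_uniq => /andP[_ /= /andP[Tv pv]] /and3P[_ disj _].
have head_in : head b p2 \in rcons p2 b by case: p2 {pv disj} => *; apply: mem_head.
split=> //; first by case: p2 pv {disj head_in} => [|w p2] /= /andP[].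
apply: contraNneq disj => e; apply/orP; right; apply/hasP.
by exists (head b p2); rewrite // -e mem_last.
Qed.

End Degrees.

Section ConnectedSymmetric.
Variables (n : nat) (T : rel 'I_n).
Hypotheses (Tsym : symmetric T) (Tconn : forall a b, connect T a b).

Lemma walk_dist a b : walk T a b (dist T a b).
Proof. exact/dist_walk/connect_dist_lt. Qed.

Lemma dist_gt0 a b : a != b -> (0 < dist T a b)%N.
Proof.
move=> ab; rewrite lt0n; apply: contraNneq ab => dist0.
by move: (walk_dist a b); rewrite dist0 => /walk0/eqP.
Qed.

Lemma dist_le_branching i j :
  (dist T i j <= #|[set v | (1 < degree T v)%N]| + 1)%N.
Proof.
have [<-|] := eqVneq i j; first exact: leq_trans (dist_le (walk_nil T i)) _.
have /connectP[p pT eq_j] := Tconn i j; move: eq_j.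
case: (shortenP pT) => q qT uq _ -> {p pT}.
case/lastP: q qT uq => [|q c] qT uq; rewrite ?eqxx // last_rcons => _.
apply: leq_trans (dist_le (k := (size q).+1) _) _.
  by exists (rcons q c); rewrite size_rcons last_rcons.
have uniq_q : uniq q by move: uq; rewrite /= rcons_uniq => /andP[_ /andP[]].
rewrite addn1 ltnS -(card_uniqP uniq_q); apply/subset_leq_card/subsetP => v vq.
case/splitPr: vq qT uq => q1 q2; rewrite rcons_cat rcons_cons inE => qT uq.
have [Tuv Tvw uw] := uniq_path_inner_neighbours qT uq.
by apply: two_neighbours_degree _ Tvw uw; rewrite Tsym.
Qed.

End ConnectedSymmetric.

Local Open Scope ring_scope.

Section F1LSolution.
Variables (R : realFieldType) (n : nat) (E : rel 'I_n) (delta : 'I_n -> nat)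
  (L : nat) (M : R) (x : 'I_n -> 'I_n -> bool) (y : 'I_n -> 'I_n -> 'I_n -> bool)
  (d : 'I_n -> 'I_n -> nat).
Hypotheses (Esym : symmetric E) (feas : F1L_feasible E delta L M x y d).

Local Notation S := (selected E x).

Lemma selected_sym : symmetric S.
Proof.
have [x_sym _] := feas; move=> i j; rewrite /selected Esym.
by case Eji: (E j i); rewrite //= x_sym // Esym.
Qed.

Lemma selected_degree i : degree S i = delta i.
Proof.
have [_ [_ [_ [_ [_ [_ x_deg]]]]]] := feas.
rewrite -x_deg degreeE [RHS]big_mkcond; apply: eq_bigr => j _.
by rewrite /selected; case: (E i j).
Qed.

Lemma selected_next_hop (a b : 'I_n) : (a < b)%N -> ~~ S a b ->
  exists c, [/\ S a c, c != b & (d c b < d a b)%N].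
Proof.
have [_ [_ [bigM [y_adj [y_nonadj [y_x _]]]]]] := feas; move=> lt_ab nSab.
have sum_y : (\sum_(k | E a k && (k != b)) (y a k b : nat))%N = 1%N.
  case Eab: (E a b); last by apply: y_nonadj; rewrite ?Eab.
  by rewrite y_adj //; move: nSab; rewrite /selected Eab /= => /negbTE ->.
have [c /andP[/andP[Eac cb] yc] | no_hop] :=
  pickP (fun k => E a k && (k != b) && y a k b).
  exists c; split=> //.
    by rewrite /selected Eac (implyP (y_x _ _ _ lt_ab Eac cb)).
  have := bigM a b c lt_ab Eac cb; rewrite yc /= subrr mulr0 subr0.
  by rewrite -[1]/(1%:R) -natrD ler_nat addn1.
move: sum_y; rewrite big1 // => k /andP[Eak kb].
by have := no_hop k; rewrite Eak kb => /negbT; case: (y a k b).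
Qed.

Lemma selected_walk (a b : 'I_n) : a != b -> exists2 k, (k <= d a b)%N & walk S a b k.
Proof.
have [_ [d_sym_range _]] := feas.
have [N] := ubnP (d a b); elim: N => // N IH in a b *; rewrite ltnS => le_dN ab.
wlog lt_ab : a b ab le_dN / (a < b)%N.
  move=> hwlog; have [|gt_ab|/val_inj eq_ab] := ltngtP a b; first exact: hwlog.
    have [d_ab _] := d_sym_range a b ab; rewrite d_ab in le_dN *.
    have [|k le_k w] := hwlog b a _ le_dN gt_ab; first by rewrite eq_sym.
    by exists k => //; apply: walk_rev selected_sym _ _ _ w.
  by rewrite eq_ab eqxx in ab.
have [Sab | nSab] := boolP (S a b).
  exists 1%N; first by case: (d_sym_range a b ab) => _ /andP[].
  by exists [:: b]; rewrite /= Sab.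
have [c [Sac cb lt_d]] := selected_next_hop lt_ab nSab.
have [k le_k w] := IH c b (leq_trans lt_d le_dN) cb.
by exists k.+1; [exact: leq_ltn_trans le_k lt_d | exact: walk_cons Sac w].
Qed.

Lemma selected_connect a b : connect S a b.
Proof.
have [<-|ab] := eqVneq a b; first exact: connect0.
by have [k _ [p [_ pS <-]]] := selected_walk ab; apply/connectP; exists p.
Qed.

Lemma selected_admissible : (forall i, ~~ E i i) ->
  (\sum_i delta i)%N = (2 * (n - 1))%N -> admissible E delta S.
Proof.
move=> Eirr sum_delta; split; last exact: selected_degree.
have S_irr i : ~~ S i i by rewrite /selected (negbTE (Eirr i)).
split; first by move=> i j /andP[].
split; first exact: selected_sym.
split; first exact: selected_connect.
have := sum_degree selected_sym S_irr.
rewrite (eq_bigr _ (fun i _ => selected_degree i)) sum_delta => /eqP.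
by rewrite eqn_mul2l => /eqP.
Qed.

Lemma comm_cost_selected_le_obj (mu : 'I_n -> 'I_n -> R) :
  (forall i j, i != j -> 0 <= mu i j) -> comm_cost mu S <= F1L_obj mu d.
Proof.
move=> mu_ge0; apply: ler_sum => i _; apply: ler_sum => j ji.
have ij : i != j by rewrite eq_sym.
rewrite ler_wpM2l ?mu_ge0 // ler_nat.
by have [k le_k w] := selected_walk ij; apply: leq_trans (dist_le w) le_k.
Qed.

End F1LSolution.

Section TreeSolution.
Variables (n : nat) (T : rel 'I_n).

Definition next_hop (i j : 'I_n) : option 'I_n :=
  [pick k | T i k && (dist T k j < dist T i j)%N].

Definition next_hop_y (i k j : 'I_n) : bool :=
  ~~ T i j && (next_hop i j == Some k).

Lemma next_hop_yP i k j : next_hop_y i k j -> T i k /\ (dist T k j < dist T i j)%N.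
Proof.
rewrite /next_hop_y /next_hop.
by case: pickP => [k' /andP[? ?] | _] /andP[_ /eqP] // [<-].
Qed.

Hypothesis Tconn : forall a b, connect T a b.

Lemma next_hop_exists i j : i != j -> exists2 k, next_hop i j = Some k & T i k.
Proof.
move=> ij; rewrite /next_hop.
case: pickP => [k /andP[Tik _] | no_hop]; first by exists k.
have [c Tic walk_c] : exists2 c, T i c & walk T c j (dist T i j).-1.
  by apply: walk_uncons; rewrite prednK; [apply: walk_dist | apply: dist_gt0 ij].
have := no_hop c; rewrite Tic (leq_ltn_trans (dist_le walk_c)) //.
by rewrite ltn_predL (dist_gt0 Tconn ij).
Qed.

Lemma sum_next_hop_y (P : pred 'I_n) i j : i != j -> (forall k, T i k -> P k) ->
  (\sum_(k | P k && (k != j)) (next_hop_y i k j : nat))%N = ~~ T i j.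
Proof.
move=> ij TP; have [Tij | nTij] := boolP (T i j).
  by rewrite big1 // => k _; rewrite /next_hop_y Tij.
have [k0 hop_k0 Tik0] := next_hop_exists ij.
have k0j : k0 != j by apply: contraNneq nTij => <-.
rewrite (bigD1 k0) /=; last by rewrite TP.
rewrite /next_hop_y nTij hop_k0 eqxx big1 // => k /andP[_ kk0].
by rewrite (inj_eq Some_inj) eq_sym (negbTE kk0).
Qed.

End TreeSolution.

Lemma admissible_F1L_feasible (R : realFieldType) n (E : rel 'I_n)
    (delta : 'I_n -> nat) (M : R) (T : rel 'I_n) :
  admissible E delta T ->
  let L := (#|[set i : 'I_n | (1 < delta i)%N]| + 2)%N in
  L%:R <= M -> F1L_feasible E delta L M T (next_hop_y T) (dist T).
Proof.
move=> [[TE [Tsym [Tconn _]]] Tdeg] L le_LM.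
have lt_dist_L i j : (dist T i j < L)%N.
  rewrite /L addn2 ltnS (leq_trans (dist_le_branching Tsym Tconn i j)) // addn1 ltnS.
  by apply/subset_leq_card/subsetP => v; rewrite !inE Tdeg.
split; first by move=> i j _; apply: Tsym.
split.
  move=> i j ij; split; first exact: dist_sym.
  by rewrite dist_gt0 // ltnW.
split.
  move=> i j k _ _ _; case hop: (next_hop_y T i k j) => /=.
    have [_ lt_d] := next_hop_yP hop; rewrite subrr mulr0 subr0.
    by rewrite -[1]/(1%:R) -natrD ler_nat addn1.
  have : (dist T k j).+1%:R <= L%:R :> R by rewrite ler_nat.
  rewrite -natr1 subr0 mulr1 => le_dL.
  have := ler0n R (dist T i j); lra.
split.
  move=> i j lt_ij _; have ij : i != j by rewrite neq_ltn lt_ij.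
  by rewrite (sum_next_hop_y Tconn ij (TE i)); case: (T i j).
split.
  move=> i j lt_ij nEij; have ij : i != j by rewrite neq_ltn lt_ij.
  by rewrite (sum_next_hop_y Tconn ij (TE i)) (contraNN (TE i j) nEij).
split; first by move=> i j k _ _ _; apply/implyP => /next_hop_yP[].
move=> i; rewrite -Tdeg degreeE big_mkcond; apply: eq_bigr => j _.
by case Eij: (E i j); rewrite // (contraFF (TE i j) Eij).
Qed.

Theorem proposition3 (R : realFieldType) (n : nat) (E : rel 'I_n)
  (mu : 'I_n -> 'I_n -> R) (delta : 'I_n -> nat) (M : R)
  (x : 'I_n -> 'I_n -> bool) (y : 'I_n -> 'I_n -> 'I_n -> bool)
  (d : 'I_n -> 'I_n -> nat) :
  (1 < n)%N ->
  simple_graph E ->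
  (forall i j, i != j -> mu i j = mu j i) ->
  (forall i j, i != j -> 0 <= mu i j) ->
  (forall i, (0 < delta i)%N) ->
  (\sum_(i : 'I_n) delta i)%N = (2 * (n - 1))%N ->
  (exists T : rel 'I_n, admissible E delta T) ->
  let L := (#|[set i : 'I_n | (1 < delta i)%N]| + 2)%N in
  L%:R <= M ->
  F1L_feasible E delta L M x y d ->
  (forall x' y' d', F1L_feasible E delta L M x' y' d' ->
     F1L_obj mu d <= F1L_obj mu d') ->
  admissible E delta (selected E x) /\
  (forall T : rel 'I_n, admissible E delta T ->
     comm_cost mu (selected E x) <= comm_cost mu T) /\
  F1L_obj mu d = comm_cost mu (selected E x).
Proof.
move=> _ [Esym Eirr] _ mu_ge0 _ sum_delta _ L le_LM feas opt.
have S_adm := selected_admissible Esym feas Eirr sum_delta.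
have cost_le_obj := comm_cost_selected_le_obj Esym feas mu_ge0.
have obj_le_cost T : admissible E delta T -> F1L_obj mu d <= comm_cost mu T.
  by move=> T_adm; apply/opt/admissible_F1L_feasible.
split=> //; split=> [T T_adm|]; first exact: le_trans cost_le_obj (obj_le_cost T T_adm).
by apply/eqP; rewrite eq_le cost_le_obj obj_le_cost.
Qed.
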